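(* Let $\Gamma$ be a 3-colex, $c\neq c'$ colors, and let $s$ be the syndrome of a $Z$-error on the 3D color code on $\Gamma$. Then the restriction $\pi_{cc'}(s)$ of $s$ to the vertices of $\Gamma^{*\setminus cc'}$ is a valid syndrome for a $Z$-error on the 3D toric code on $\Gamma^{*\setminus cc'}$, i.e. there exists a $Z$-error on the edges of $\Gamma^{*\setminus cc'}$ whose toric-code syndrome is $\pi_{cc'}(s)$.
   Context: Colors are $\{r,b,g,y\}$. A 3-colex $\Gamma$ is a 3-dimensional cell complex without boundary in which every vertex is 4-valent and lies in exactly four 3-cells, and whose 3-cells are properly 4-colored: every face lies in exactly two 3-cells, which have different colors. The dual complex $\Gamma^*$ has an $i$-cell for every $(3-i)$-cell of $\Gamma$, with incidences reversed; every 3-cell of $\Gamma^*$ is a tetrahedron. A vertex of $\Gamma^*$ is given the color of the corresponding 3-cell of $\Gamma$, so the four vertices of each tetrahedron have distinct colors; an edge with endpoint colors $x,y$ is an $xy$-edge. The 3D color code on $\Gamma$ has one qubit per tetrahedron $\nu$ of $\Gamma^*$, $X$-stabilizer generators $\prod_{\nu\ni v}X_\nu$ for vertices $v$ and $Z$-stabilizer generators $\prod_{\nu\supset e}Z_\nu$ for edges $e$. The syndrome of a $Z$-error $\prod_{\nu\in\Omega}Z_\nu$ is the function on vertices $s_v=|\{\nu\in\Omega:v\in\nu\}|\bmod 2$. For distinct $c,c'$ with remaining colors $d,d'$, the minor complex $\Gamma^{*\setminus cc'}$ is obtained by deleting all vertices of colors $c,c'$; its vertices are the $d$- and $d'$-vertices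 and its edges the $dd'$-edges of $\Gamma^*$. The 3D toric code on $\Gamma^{*\setminus cc'}$ has qubits on edges and $X$-checks $\prod_{e\ni v}X_e$ on vertices; the syndrome of a $Z$-error on edges at a vertex is the parity of the number of error edges incident to it. *)

From mathcomp Require Import all_boot.
Set Implicit Arguments. Unset Strict Implicit. Unset Printing Implicit Defensive.

(* Colors {r,b,g,y} are encoded as 'I_4 (r = 0, b = 1, g = 2, y = 3). *)
Definition color := 'I_4.

(* Raw cell data of the dual complex Gamma^*: vertices, edges, triangular
   faces (2-cells) and tetrahedra (3-cells), with incidences given by
   boundaries, and the vertex coloring. *)
Record dual_complex := DualComplex {
  vtx : finType;
  edg : finType;
  fac : finType;
  tet : finType;
  vcol : vtx -> color;
  ends : edg -> {set vtx};
  fedges : fac -> {set edg};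
  tfaces : tet -> {set fac}
}.

Section Derived.
Variable G : dual_complex.

Definition fverts (f : fac G) : {set vtx G} := \bigcup_(e in fedges f) ends e.
Definition tedges (t : tet G) : {set edg G} := \bigcup_(f in tfaces t) fedges f.
Definition tverts (t : tet G) : {set vtx G} := \bigcup_(e in tedges t) ends e.

(* Gamma^* is the dual of a 3-colex: every edge joins two vertices of
   different colors (dual of "every face of Gamma lies in two 3-cells of
   different colors"); every 3-cell is a tetrahedron whose four vertices
   have distinct colors (dual of "every vertex is 4-valent and lies in
   exactly four 3-cells"); every face lies in exactly two tetrahedra
   (no boundary); the complex is purely 3-dimensional. *)
Definition is_colex_dual : Prop :=
  [/\ (forall e : edg G, #|ends e| = 2 /\
         {in ends e &, forall u w, u != w -> vcol u != vcol w}),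
      (forall f : fac G, #|fedges f| = 3 /\ #|fverts f| = 3),
      (forall t : tet G,
         [/\ #|tfaces t| = 4, #|tverts t| = 4,
             {in tverts t &, injective (@vcol G)} &
             {in tverts t &, forall u w, u != w ->
                 exists2 e, e \in tedges t & ends e = [set u; w]}]),
      (forall f : fac G, #|[set t : tet G | f \in tfaces t]| = 2) &
      [/\ (forall v : vtx G, exists t, v \in tverts t),
          (forall e : edg G, exists t, e \in tedges t) &
          (forall f : fac G, exists t, f \in tfaces t)]].

(* Syndrome of the Z-error prod_{nu in Omega} Z_nu of the 3D color code. *)
Definition cc_syndrome (Omega : {set tet G}) (v : vtx G) : bool :=
  odd #|[set nu in Omega | v \in tverts nu]|.

(* Minor complex Gamma^{* \ cc'}: vertices not of color c, c'; edges both
   of whose endpoints are such vertices (i.e. the dd'-edges). *)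
Definition minor_vertex (c c' : color) (v : vtx G) : bool :=
  (vcol v != c) && (vcol v != c').
Definition minor_edge (c c' : color) (e : edg G) : bool :=
  [forall v in ends e, minor_vertex c c' v].

Definition tc_syndrome (Er : {set edg G}) (v : vtx G) : bool :=
  odd #|[set e in Er | v \in ends e]|.

End Derived.

(* Every tetrahedron of Gamma^* has exactly two vertices whose colors avoid
   c and c', and they span an edge of the minor complex; send each error
   tetrahedron to that edge and keep the edges hit an odd number of times.
   A vertex v of the minor complex lies on the chosen edge of t exactly when
   it lies on t, so counting mod 2 along the fibres of this map shows that
   both syndromes at v have the parity of #{t in Omega | v in t}. *)

From mathcomp Require Import all_boot.

Set Implicit Arguments.
Unset Strict Implicit.
Unset Printing Implicit Defensive.

Lemma odd_card_odd_fibres (T U : finType) (g : T -> U) (A : {set T}) (Q : pred U) :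
  odd #|[set u | Q u & odd #|[set t in A | g t == u]|]| =
  odd #|[set t in A | Q (g t)]|.
Proof.
have odd_sum (P : pred U) (F : U -> nat) :
    odd (\sum_(u | P u) F u) = \big[addb/false]_(u | P u) odd (F u).
  exact: (big_morph odd oddD).
have -> : #|[set t in A | Q (g t)]| = \sum_(u | Q u) #|[set t in A | g t == u]|.
  rewrite -sum1_card (partition_big g Q) => [|t]; last by rewrite inE => /andP[].
  apply: eq_bigr => u Qu; rewrite -sum1_card; apply: eq_bigl => t.
  by rewrite !inE; case: (g t =P u) => [->|_]; rewrite ?Qu ?andbT ?andbF.
rewrite -sum1_card !odd_sum big_mkcond [RHS]big_mkcond /=.
by apply: eq_bigr => u _; rewrite inE; case: (Q u); case: (odd _).
Qed.

Section MinorEdgeOfTetrahedron.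
Variables (G : dual_complex) (c c' : color).

Definition minor_tverts (t : tet G) : {set vtx G} :=
  [set u in tverts t | minor_vertex c c' u].

Lemma minor_edge_of_ends (t : tet G) (e : edg G) :
  ends e = minor_tverts t -> minor_edge c c' e.
Proof. by rewrite /minor_edge => ->; apply/forall_inP => u; rewrite inE => /andP[]. Qed.

Hypotheses (HG : is_colex_dual G) (Hcc : c != c').

Lemma card_minor_tverts (t : tet G) : #|minor_tverts t| = 2.
Proof.
case: HG => _ _ /(_ t)[_ card_t vcol_inj _] _ _.
have vcol_onto : @vcol G @: tverts t = setT.
  by apply/eqP; rewrite eqEcard subsetT card_in_imset // card_t cardsT card_ord.
have vcol_minor : @vcol G @: minor_tverts t = ~: [set c; c'].
  apply/setP => x; rewrite !inE negb_or; apply/imsetP/idP.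
    by case=> u; rewrite inE => /andP[_ /andP[]] ? ? ->; apply/andP.
  move=> Hx; have : x \in @vcol G @: tverts t by rewrite vcol_onto inE.
  by case/imsetP=> u Hu Hxu; exists u; rewrite // inE Hu /minor_vertex -Hxu.
rewrite -(card_in_imset (sub_in2 _ vcol_inj)); last by move=> u; rewrite inE => /andP[].
by rewrite vcol_minor cardsCs setCK cards2 Hcc card_ord.
Qed.

Lemma exists_edge_on_minor_tverts (t : tet G) :
  exists e : edg G, ends e == minor_tverts t.
Proof.
have /eqP/cards2P[u [w [Huw minor_t]]] := card_minor_tverts t.
have in_tverts x : x \in [set u; w] -> x \in tverts t.
  by rewrite -minor_t inE => /andP[].
case: HG => _ _ /(_ t)[_ _ _ has_edge] _ _.
have [e _ ends_e] := has_edge u w (in_tverts _ (set21 _ _)) (in_tverts _ (set22 _ _)) Huw.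
by exists e; rewrite ends_e minor_t.
Qed.

End MinorEdgeOfTetrahedron.

Theorem corollary4 (G : dual_complex) (HG : is_colex_dual G)
  (c c' : color) (Hcc : c != c') (Omega : {set tet G}) :
  exists Er : {set edg G},
    {subset Er <= minor_edge c c'} /\
    forall v : vtx G, minor_vertex c c' v ->
      tc_syndrome Er v = cc_syndrome Omega v.
Proof.
pose e_of (t : tet G) := xchoose (exists_edge_on_minor_tverts HG Hcc t).
have ends_e_of t : ends (e_of t) = minor_tverts c c' t.
  exact: eqP (xchooseP (exists_edge_on_minor_tverts HG Hcc t)).
exists [set e | odd #|[set t in Omega | e_of t == e]|]; split.
  move=> e; rewrite inE => /odd_gt0/card_gt0P[t]; rewrite inE => /andP[_ /eqP <-].
  exact: minor_edge_of_ends (ends_e_of t).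
move=> v minor_v; rewrite /tc_syndrome /cc_syndrome.
rewrite (eq_card (B := [set e | v \in ends e & odd #|[set t in Omega | e_of t == e]|])).
  rewrite odd_card_odd_fibres; congr odd; apply: eq_card => t.
  by rewrite !inE ends_e_of inE minor_v andbT.
by move=> e; rewrite !inE andbC.
Qed.
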